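(* Let $\mathbb{K}\in\{\mathbb{R},\mathbb{C}\}$, $X:=\mathbb{K}^n$ with $\langle\mathbf{x},\mathbf{y}\rangle_X:=\langle\mathbf{R}_X\mathbf{x},\mathbf{y}\rangle$ for a self-adjoint positive definite $\mathbf{R}_X$, and dual norm $\|\mathbf{y}'\|_{X'}:=\langle\mathbf{y}',\mathbf{R}_X^{-1}\mathbf{y}'\rangle^{1/2}$. Let $Z\subseteq Y\subseteq X$ be subspaces and $Y':=\{\mathbf{R}_X\mathbf{y}:\mathbf{y}\in Y\}$. Let $\mathbf{\Theta}\in\mathbb{K}^{k\times n}$ satisfy, for some $\varepsilon\in[0,1)$, $|\langle\mathbf{x},\mathbf{y}\rangle_X-\langle\mathbf{\Theta}\mathbf{x},\mathbf{\Theta}\mathbf{y}\rangle|\le\varepsilon\|\mathbf{x}\|_X\|\mathbf{y}\|_X$ for all $\mathbf{x},\mathbf{y}\in Y$. For $\mathbf{y}'\in Y'$ define $$\|\mathbf{y}'\|_{Z'}:=\max_{\mathbf{x}\in Z\setminus\{\mathbf{0}\}}\frac{|\langle\mathbf{y}',\mathbf{x}\rangle|}{\|\mathbf{x}\|_X},\qquad\|\mathbf{y}'\|_{Z'}^{\mathbf{\Theta}}:=\max_{\mathbf{x}\in Z\setminus\{\mathbf{0}\}}\frac{|\langle\mathbf{\Theta}\mathbf{R}_X^{-1}\mathbf{y}',\mathbf{\Theta}\mathbf{x}\rangle|}{\|\mathbf{\Theta}\mathbf{x}\|}.$$ Then for all $\mathbf{y}'\in Y'$, $$\frac{1}{\s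qrt{1+\varepsilon}}\big(\|\mathbf{y}'\|_{Z'}-\varepsilon\|\mathbf{y}'\|_{X'}\big)\le\|\mathbf{y}'\|_{Z'}^{\mathbf{\Theta}}\le\frac{1}{\sqrt{1-\varepsilon}}\big(\|\mathbf{y}'\|_{Z'}+\varepsilon\|\mathbf{y}'\|_{X'}\big).$$
   Context: $\langle\mathbf{x},\mathbf{y}\rangle=\mathbf{x}^{\mathrm{H}}\mathbf{y}$ is the canonical inner product and $\|\cdot\|$ the Euclidean norm; $\|\cdot\|_X$ is the norm induced by $\langle\cdot,\cdot\rangle_X$. *)

From HB Require Import structures.
From mathcomp Require Import all_boot all_order all_algebra.
From mathcomp Require Import classical_sets reals.
From mathcomp Require Import complex.

Set Implicit Arguments.
Unset Strict Implicit.
Unset Printing Implicit Defensive.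

Import Order.TTheory GRing.Theory Num.Theory.
Local Open Scope ring_scope.
Local Open Scope classical_set_scope.

(* Generic setting: R is the real field; K is the scalar field (K = R or
   K = R[i]), with conjugation [conj] (identity for K = R) and modulus
   [absK : K -> R]. Subspaces of
   K^n are represented by matrices whose row spaces (mxalgebra) contain the
   transposed vectors. *)
Section Generic.
Variables (R : realType) (K : numFieldType) (conj : K -> K) (absK : K -> R).

Definition dotK n (x y : 'cV[K]_n) : K := \sum_(i < n) conj (x i 0) * y i 0.

Definition enorm n (x : 'cV[K]_n) : R := Num.sqrt (absK (dotK x x)).

Definition inSub n (S : 'M[K]_n) (x : 'cV[K]_n) : Prop := (x^T <= S)%MS.

Definition dotX n (RX : 'M[K]_n) (x y : 'cV[K]_n) : K := dotK (RX *m x) y.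
Definition normX n (RX : 'M[K]_n) (x : 'cV[K]_n) : R :=
  Num.sqrt (absK (dotX RX x x)).

Definition normXd n (RX : 'M[K]_n) (y' : 'cV[K]_n) : R :=
  Num.sqrt (absK (dotK y' (invmx RX *m y'))).

Definition normZd n (RX Z : 'M[K]_n) (y' : 'cV[K]_n) : R :=
  sup [set r : R | exists x : 'cV[K]_n,
        [/\ inSub Z x, x != 0 & r = absK (dotK y' x) / normX RX x]].

Definition normZdTheta n k (RX Z : 'M[K]_n) (Theta : 'M[K]_(k, n))
    (y' : 'cV[K]_n) : R :=
  sup [set r : R | exists x : 'cV[K]_n,
        [/\ inSub Z x, x != 0 &
            r = absK (dotK (Theta *m (invmx RX *m y')) (Theta *m x))
                / enorm (Theta *m x)]].

Definition selfadjoint n (M : 'M[K]_n) : Prop :=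
  forall i j, M j i = conj (M i j).
Definition posdef n (M : 'M[K]_n) : Prop :=
  forall x : 'cV[K]_n, x != 0 -> 0 < dotK (M *m x) x.

Definition prop34_stmt : Prop :=
  forall (n k : nat) (RX : 'M[K]_n) (Y Z : 'M[K]_n) (Theta : 'M[K]_(k, n))
         (eps : R),
    selfadjoint RX -> posdef RX ->
    (Z <= Y)%MS ->
    0 <= eps -> eps < 1 ->
    (forall x y : 'cV[K]_n, inSub Y x -> inSub Y y ->
        absK (dotX RX x y - dotK (Theta *m x) (Theta *m y))
          <= eps * normX RX x * normX RX y) ->
    forall y' : 'cV[K]_n, (exists y, inSub Y y /\ y' = RX *m y) ->
      (Num.sqrt (1 + eps))^-1 * (normZd RX Z y' - eps * normXd RX y')
        <= normZdTheta RX Z Theta y' /\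
      normZdTheta RX Z Theta y'
        <= (Num.sqrt (1 - eps))^-1 * (normZd RX Z y' + eps * normXd RX y').

End Generic.

Definition prop34_real (R : realType) : Prop :=
  @prop34_stmt R R id (fun z : R => `|z|).
Definition prop34_complex (R : realType) : Prop :=
  @prop34_stmt R (R[i]) (@conjc R) (@ComplexField.Normc.normc R).

(* Write y' = R_X y. Then <y', x> = <y, x>_X, <Theta R_X^-1 y', Theta x> =
   <Theta y, Theta x> and ||y'||_X' = ||y||_X, so the embedding hypothesis
   bounds the difference of the two numerators by eps ||y||_X ||x||_X, while
   its diagonal case gives sqrt(1 - eps) ||x||_X <= ||Theta x|| <=
   sqrt(1 + eps) ||x||_X. Comparing the two quotients for each x in Z and
   passing to suprema yields both inequalities. The real and complex cases are
   treated at once: K only needs a conjugation and a modulus that agree with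
   the norm of K through an order embedding of R into K. *)

From HB Require Import structures.
From mathcomp Require Import all_boot all_order all_algebra.
From mathcomp Require Import classical_sets reals.
From mathcomp Require Import complex.
From mathcomp Require Import ring lra.

Set Implicit Arguments.
Unset Strict Implicit.
Unset Printing Implicit Defensive.
Import Order.TTheory GRing.Theory Num.Theory.
Local Open Scope ring_scope.
Local Open Scope classical_set_scope.

Lemma sqrt_scale_bounds (R : rcfType) (e a b : R) :
  0 <= e -> 0 <= a -> 0 <= b -> `|a ^+ 2 - b ^+ 2| <= e * a ^+ 2 ->
  Num.sqrt (1 - e) * a <= b <= Num.sqrt (1 + e) * a.
Proof.
move=> e0 a0 b0; rewrite ler_norml => /andP[lo hi].
have sqrt_mul c : 0 <= c -> Num.sqrt c * a = Num.sqrt (c * a ^+ 2).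
  by move=> c0; rewrite sqrtrM // sqrtr_sqr ger0_norm.
rewrite -[b]ger0_norm // -sqrtr_sqr.
have [e1|e1] := lerP e 1.
  rewrite !sqrt_mul ?subr_ge0 ?addr_ge0 // !ler_sqrt ?sqr_ge0 ?mulr_ge0 //;
    [apply/andP; split; lra | lra].
rewrite ltr0_sqrtr ?subr_lt0 // mul0r sqrtr_ge0 sqrt_mul ?addr_ge0 //=.
by rewrite ler_sqrt ?mulr_ge0 ?addr_ge0 //; lra.
Qed.

Lemma ratio_perturb_bounds (R : realFieldType) (p q a b c s t : R) :
  0 <= q -> 0 < a -> 0 < s -> s * a <= b -> b <= t * a -> `|p - q| <= c * a ->
  p / a <= t * (q / b) + c /\ q / b <= s^-1 * (p / a) + s^-1 * c.
Proof.
move=> q0 a0 s0 sab bta; rewrite ler_norml => /andP[lo hi].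
have b0 : 0 < b by apply: lt_le_trans sab; rewrite mulr_gt0.
set u := q / b; have u0 : 0 <= u by rewrite /u divr_ge0 // ltW.
have qE : q = u * b by rewrite /u divfK ?gt_eqF.
rewrite qE in lo hi; split.
  rewrite ler_pdivrMr //.
  have : u * b <= u * (t * a) by rewrite ler_wpM2l.
  nra.
rewrite -mulrDr ler_pdivlMl // -(ler_pM2r a0) mulrDl divfK ?gt_eqF //.
have : u * (s * a) <= u * b by rewrite ler_wpM2l.
nra.
Qed.

Lemma image_setIE (T U : Type) (A B : set T) (f : T -> U) :
  f @` (A `&` B) = [set r | exists x, [/\ A x, B x & r = f x]].
Proof.
apply/seteqP; split=> r /=.
  by case=> x [Ax Bx] <-; exists x.
by case=> x [Ax Bx ->]; exists x.
Qed.

Lemma sup_le_affine (R : realType) (T : Type) (A : set T) (f g : T -> R)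
    (a b : R) :
  0 <= a -> 0 <= b -> has_ubound (g @` A) ->
  (forall x, A x -> f x <= a * g x + b) ->
  sup (f @` A) <= a * sup (g @` A) + b.
Proof.
move=> a0 b0 gub fg; have [->|/set0P[x0 Ax0]] := eqVneq A set0.
  by rewrite !image_set0 sup0 mulr0 add0r.
apply: ge_sup; first by exists (f x0), x0.
move=> _ [x Ax <-]; apply: le_trans (fg x Ax) _.
by rewrite lerD2r ler_wpM2l // (ub_le_sup gub); last by exists x.
Qed.

Section ScalarField.
Variables (R : realType) (K : numFieldType) (cj : {rmorphism K -> K})
  (absK : K -> R) (emb : {rmorphism R -> K}).
Hypothesis conjK : involutive cj.
Hypothesis mul_conj : forall z, cj z * z = `|z| ^+ 2.
Hypothesis emb_absK : forall z, emb (absK z) = `|z|.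
Hypothesis ler_emb : {mono emb : a b / a <= b}.

Lemma ltr_emb : {mono emb : a b / a < b}.
Proof. by move=> a b; rewrite !lt_def ler_emb (inj_eq (fmorph_inj emb)). Qed.

Lemma normr_emb r : `|emb r| = emb `|r|.
Proof.
have [r0|r0] := leP 0 r.
  by rewrite !ger0_norm // -(rmorph0 emb) ler_emb.
by rewrite !ltr0_norm ?rmorphN // -(rmorph0 emb) ltr_emb.
Qed.

Lemma absK_emb r : absK (emb r) = `|r|.
Proof. by apply: (fmorph_inj emb); rewrite emb_absK normr_emb. Qed.

Lemma absK_ge0 z : 0 <= absK z.
Proof. by rewrite -ler_emb rmorph0 emb_absK. Qed.

Lemma ger0_emb_absK z : 0 <= z -> emb (absK z) = z.
Proof. by move=> z0; rewrite emb_absK ger0_norm. Qed.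

Lemma absK_dist u v : `|absK u - absK v| <= absK (u - v).
Proof. by rewrite -ler_emb -normr_emb rmorphB !emb_absK ler_dist_dist. Qed.

Local Notation dot := (dotK cj).
Local Notation norm := (enorm cj absK).

Lemma dotK0l n (z : 'cV[K]_n) : dot 0 z = 0.
Proof. by rewrite /dotK big1 // => i _; rewrite mxE rmorph0 mul0r. Qed.

Lemma dotKBl n (x y z : 'cV[K]_n) : dot (x - y) z = dot x z - dot y z.
Proof.
by rewrite /dotK -sumrB; apply: eq_bigr => i _; rewrite !mxE rmorphB mulrBl.
Qed.

Lemma dotKBr n (x y z : 'cV[K]_n) : dot z (x - y) = dot z x - dot z y.
Proof.
by rewrite /dotK -sumrB; apply: eq_bigr => i _; rewrite !mxE mulrBr.
Qed.

Lemma dotKZl n c (x z : 'cV[K]_n) : dot (c *: x) z = cj c * dot x z.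
Proof.
by rewrite /dotK mulr_sumr; apply: eq_bigr => i _; rewrite mxE rmorphM mulrA.
Qed.

Lemma dotKZr n c (x z : 'cV[K]_n) : dot z (c *: x) = c * dot z x.
Proof.
by rewrite /dotK mulr_sumr; apply: eq_bigr => i _; rewrite mxE mulrCA.
Qed.

Lemma conj_dotK n (x y : 'cV[K]_n) : cj (dot x y) = dot y x.
Proof.
rewrite /dotK rmorph_sum; apply: eq_bigr => i _.
by rewrite rmorphM conjK mulrC.
Qed.

Lemma dotK_ge0 n (x : 'cV[K]_n) : 0 <= dot x x.
Proof. by apply: sumr_ge0 => i _; rewrite mul_conj exprn_ge0. Qed.

Lemma dotK_gt0 n (x : 'cV[K]_n) : x != 0 -> 0 < dot x x.
Proof.
apply: contraNT; rewrite lt0r dotK_ge0 andbT negbK => /eqP x0.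
apply/eqP/matrixP => i j; rewrite (ord1 j) !mxE.
have terms_ge0 k : true -> 0 <= cj (x k 0) * x k 0.
  by rewrite mul_conj exprn_ge0.
have /eqP := psumr_eq0P terms_ge0 x0 (i := i) isT.
by rewrite mul_conj sqrf_eq0 normr_eq0 => /eqP.
Qed.

Lemma emb_sqr_enorm n (x : 'cV[K]_n) : emb (norm x ^+ 2) = dot x x.
Proof. by rewrite sqr_sqrtr ?absK_ge0 // ger0_emb_absK // dotK_ge0. Qed.

Lemma dotK_CauchySchwarz_sqr n (a b : 'cV[K]_n) :
  `|dot a b| ^+ 2 <= dot a a * dot b b.
Proof.
have [->|a0] := eqVneq a 0; first by rewrite !dotK0l normr0 expr0n mul0r.
set al := dot a a; set be := dot a b.
have al_gt0 : 0 < al := dotK_gt0 a0.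
have conj_al : cj al = al by rewrite conj_dotK.
have proj : dot (al *: b - be *: a) (al *: b - be *: a)
    = al * (al * dot b b - `|be| ^+ 2).
  rewrite !dotKBl !dotKBr !dotKZl !dotKZr conj_al -mul_conj -[dot b a]conj_dotK.
  rewrite -/al -/be; ring.
by have := dotK_ge0 (al *: b - be *: a); rewrite proj pmulr_rge0 // subr_ge0.
Qed.

Lemma dotK_CauchySchwarz n (a b : 'cV[K]_n) : absK (dot a b) <= norm a * norm b.
Proof.
rewrite -ler_sqr ?nnegrE ?mulr_ge0 ?absK_ge0 ?sqrtr_ge0 // -ler_emb.
rewrite rmorphXn emb_absK exprMn rmorphM !emb_sqr_enorm.
exact: dotK_CauchySchwarz_sqr.
Qed.

Lemma dotK_div_enorm_le n (u v : 'cV[K]_n) : absK (dot u v) / norm v <= norm u.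
Proof.
have [->|v0] := eqVneq (norm v) 0; first by rewrite invr0 mulr0 sqrtr_ge0.
by rewrite ler_pdivrMr ?dotK_CauchySchwarz // lt0r v0 sqrtr_ge0.
Qed.

Local Notation dotX := (dotX cj).
Local Notation normX := (normX cj absK).

Lemma posdef_unitmx n (M : 'M[K]_n) : posdef cj M -> M \in unitmx.
Proof.
move=> Mpd; rewrite unitmxE unitfE -det_tr; apply/det0P => -[v v0 vM].
have := Mpd v^T; rewrite trmx_eq0 => /(_ v0).
by rewrite -[M]trmxK -trmx_mul vM trmx0 dotK0l ltxx.
Qed.

Lemma posdef_dotX_ge0 n (M : 'M[K]_n) x : posdef cj M -> 0 <= dotX M x x.
Proof.
move=> Mpd; have [->|x0] := eqVneq x 0; last exact/ltW/Mpd.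
by rewrite /dotX mulmx0 dotK0l.
Qed.

Lemma emb_sqr_normX n (M : 'M[K]_n) x :
  posdef cj M -> emb (normX M x ^+ 2) = dotX M x x.
Proof.
by move=> Mpd; rewrite sqr_sqrtr ?absK_ge0 // ger0_emb_absK ?posdef_dotX_ge0.
Qed.

Lemma normX_gt0 n (M : 'M[K]_n) x : posdef cj M -> x != 0 -> 0 < normX M x.
Proof.
move=> Mpd x0; rewrite sqrtr_gt0 -ltr_emb rmorph0 ger0_emb_absK.
  exact: Mpd.
exact: posdef_dotX_ge0.
Qed.

Section Embedding.
Variables (n k : nat) (RX Y : 'M[K]_n) (Theta : 'M[K]_(k, n)) (eps : R).
Hypothesis RX_posdef : posdef cj RX.
Hypothesis eps_ge0 : 0 <= eps.
Hypothesis eps_lt1 : eps < 1.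
Hypothesis Theta_embedding : forall x y, inSub Y x -> inSub Y y ->
  absK (dotX RX x y - dot (Theta *m x) (Theta *m y))
    <= eps * normX RX x * normX RX y.

Lemma embedding_enorm_bounds x : inSub Y x ->
  Num.sqrt (1 - eps) * normX RX x <= norm (Theta *m x)
    <= Num.sqrt (1 + eps) * normX RX x.
Proof.
move=> xY; apply: sqrt_scale_bounds; rewrite ?sqrtr_ge0 //.
have := Theta_embedding xY xY.
by rewrite -emb_sqr_normX // -emb_sqr_enorm -rmorphB absK_emb -mulrA -expr2.
Qed.

Lemma dual_ratio_bounds y x : inSub Y y -> inSub Y x -> x != 0 ->
  absK (dotX RX y x) / normX RX x
    <= Num.sqrt (1 + eps) * (absK (dot (Theta *m y) (Theta *m x))
                               / norm (Theta *m x)) + eps * normX RX y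
  /\ absK (dot (Theta *m y) (Theta *m x)) / norm (Theta *m x)
    <= (Num.sqrt (1 - eps))^-1 * (absK (dotX RX y x) / normX RX x)
       + (Num.sqrt (1 - eps))^-1 * (eps * normX RX y).
Proof.
move=> yY xY x0; have /andP[lo hi] := embedding_enorm_bounds xY.
apply: ratio_perturb_bounds lo hi _; rewrite ?absK_ge0 ?normX_gt0 //.
  by rewrite sqrtr_gt0 subr_gt0.
by apply: le_trans (absK_dist _ _) _; apply: Theta_embedding.
Qed.

End Embedding.

Theorem prop34_generic : prop34_stmt cj absK.
Proof.
move=> n k RX Y Z Theta eps _ RXpd ZY eps0 eps1 Theta_emb _ [y [yY ->]].
rewrite /normXd /normZdTheta mulKmx ?posdef_unitmx // /normZd -!image_setIE.
rewrite -/(normX RX y).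
set A := (_ `&` _); set p := (fun x => _ / normX RX x).
set q := (fun x => _ / norm _).
set s1 := Num.sqrt (1 + eps); set s2 := Num.sqrt (1 - eps).
have bounds x : A x -> p x <= s1 * q x + eps * normX RX y /\
    q x <= s2^-1 * p x + s2^-1 * (eps * normX RX y).
  case=> xZ x0; have xY := submx_trans xZ ZY.
  exact: (dual_ratio_bounds RXpd eps0 eps1 Theta_emb yY xY x0).
have q_ub : has_ubound (q @` A).
  by exists (norm (Theta *m y)) => _ [x _ <-]; apply: dotK_div_enorm_le.
have p_ub : has_ubound (p @` A).
  exists (s1 * norm (Theta *m y) + eps * normX RX y) => _ [x Ax <-].
  apply: le_trans (bounds x Ax).1 _.
  by rewrite lerD2r ler_wpM2l ?sqrtr_ge0 ?dotK_div_enorm_le.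
have ny0 : 0 <= eps * normX RX y by rewrite mulr_ge0 ?sqrtr_ge0.
have s1_gt0 : 0 < s1 by rewrite sqrtr_gt0; lra.
have s2_gt0 : 0 < s2 by rewrite sqrtr_gt0; lra.
split.
  rewrite ler_pdivrMl // lerBlDr.
  by apply: sup_le_affine => //; [exact: ltW | move=> x /bounds[]].
have s2V_ge0 : 0 <= s2^-1 by rewrite invr_ge0 ltW.
rewrite mulrDr; apply: sup_le_affine => //; first exact: mulr_ge0.
by move=> x /bounds[].
Qed.

End ScalarField.

Theorem proposition3p4 (R : realType) : prop34_real R /\ prop34_complex R.
Proof.
split.
  apply: (@prop34_generic R R idfun _ idfun) => // z.
  by rewrite real_normK ?num_real // expr2.
apply: (@prop34_generic R R[i] conjc _ (real_complex R)).
- exact: conjcK.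
- by move=> z; rewrite sqr_normc mulrC.
- by [].
- exact: lecR.
Qed.
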